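(* Let $X$ be an eventually dendric shift space. For every $k\ge1$ there exists $n\ge1$ such that $\mathcal E_k(w)$ is a simple tree for every $w\in\mathcal L_{\ge n}(X)$.
   Context: $A$ is a finite alphabet; a shift space is a closed shift-invariant subset $X\subseteq A^{\mathbb Z}$; $\mathcal L(X)$ is its set of finite factors, $\mathcal L_n(X)=\mathcal L(X)\cap A^n$, $\mathcal L_{\ge n}(X)=\bigcup_{j\ge n}\mathcal L_j(X)$. For $w\in\mathcal L(X)$ and $k\ge1$: $L_k(w)=\{u\in\mathcal L_k(X):uw\in\mathcal L(X)\}$, $R_k(w)=\{v\in\mathcal L_k(X):wv\in\mathcal L(X)\}$, and the extension graph $\mathcal E_k(w)$ is the undirected bipartite graph with vertex set the disjoint union of $L_k(w)$ and $R_k(w)$ and an edge $(u,v)$ iff $uwv\in\mathcal L(X)$. $X$ is eventually dendric if for some $m\ge0$, $\mathcal E_1(w)$ is a tree for every $w\in\mathcal L_{\ge m}(X)$. A tree is simple if its diameter (maximal length of a simple path) is at most $3$. *)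

From mathcomp Require Import all_boot all_order all_algebra.
Set Implicit Arguments. Unset Strict Implicit. Unset Printing Implicit Defensive.
Import GRing.Theory Num.Theory.

Definition config (A : finType) := int -> A.

Definition shift (A : finType) (x : config A) : config A :=
  fun i => x (i + 1)%R.

(* closed in the product topology: x is in X whenever every finite central
   window [-n, n] of x agrees with some point of X *)
Definition closed_set (A : finType) (X : config A -> Prop) : Prop :=
  forall x : config A,
    (forall n : nat, exists y, X y /\
        forall i : int, (- (n%:Z) <= i <= n%:Z)%R -> y i = x i) ->
    X x.

Definition shift_invariant (A : finType) (X : config A -> Prop) : Prop :=
  forall x : config A, X x <-> X (shift x).

Definition shift_space (A : finType) (X : config A -> Prop) : Prop :=
  closed_set X /\ shift_invariant X.

Definition factor_at (A : finType) (x : config A) (i : int) (n : nat) : seq A :=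
  [seq x (i + j%:Z)%R | j <- iota 0 n].

Definition inL (A : finType) (X : config A -> Prop) (w : seq A) : Prop :=
  exists x i, X x /\ w = factor_at x i (size w).

Section Graphs.
Variable T : eqType.
Variable V : T -> Prop.
Variable E : T -> T -> Prop.

Fixpoint epath (x : T) (p : seq T) : Prop :=
  match p with
  | [::] => True
  | y :: p' => E x y /\ epath y p'
  end.

Definition all_V (p : seq T) : Prop := forall v, v \in p -> V v.

Definition connected : Prop :=
  forall a b, V a -> V b ->
    exists p, all_V (a :: p) /\ epath a p /\ last a p = b.

Definition acyclic : Prop :=
  ~ exists x p, [/\ all_V (x :: p), uniq (x :: p), 2 <= size p,
                   epath x p & E (last x p) x].

Definition is_tree : Prop := connected /\ acyclic.

(* simple path x :: p has length (number of edges) size p *)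
Definition simple_path (x : T) (p : seq T) : Prop :=
  [/\ all_V (x :: p), uniq (x :: p) & epath x p].

(* diameter (maximal length of a simple path) at most 3 *)
Definition diam_le3 : Prop :=
  forall x p, simple_path x p -> size p <= 3.

Definition simple_tree : Prop := is_tree /\ diam_le3.
End Graphs.

(* vertices: inl u for u in L_k(w), inr v for v in R_k(w) (disjoint union) *)
Definition ext_vertex (A : finType) (X : config A -> Prop) (k : nat) (w : seq A)
    (a : seq A + seq A) : Prop :=
  match a with
  | inl u => size u = k /\ inL X (u ++ w)
  | inr v => size v = k /\ inL X (w ++ v)
  end.

Definition ext_edge (A : finType) (X : config A -> Prop) (w : seq A)
    (a b : seq A + seq A) : Prop :=
  match a, b with
  | inl u, inr v => inL X (u ++ w ++ v)
  | inr v, inl u => inL X (u ++ w ++ v)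
  | _, _ => False
  end.

Definition eventually_dendric (A : finType) (X : config A -> Prop) : Prop :=
  exists m : nat, forall w, inL X w -> m <= size w ->
    is_tree (ext_vertex X 1 w) (ext_edge X w).

From mathcomp Require Import all_boot all_order all_algebra boolp.
Set Implicit Arguments. Unset Strict Implicit. Unset Printing Implicit Defensive.
Import GRing.Theory.

(* For long words [z], [E_1(z)] is a tree, so it has no 4- or 6-cycle.  Counting
   triples [(u, u', z)] shows that any two distinct left extensions of a long
   word have common right extensions of every length, and symmetrically; without
   4- and 6-cycles this forces [E_1(w)] to be a double star.  Lengthening the
   extensions one letter at a time, [E_{i,j+1}(w)] and [E_{i+1,j}(w)] are glued
   from double stars of longer words, and the common extensions keep the result
   a double star.  So [E_k(w)] is a double star, i.e. a tree of diameter at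
   most 3. *)

Definition double_star P Q (VP : P -> Prop) (VQ : Q -> Prop) (e : P -> Q -> Prop) :=
  exists p0 q0, [/\ VP p0, VQ q0 &
    forall p q, VP p -> VQ q -> e p q <-> p = p0 \/ q = q0].

Definition cycle4_free P Q (VP : P -> Prop) (VQ : Q -> Prop) (e : P -> Q -> Prop) :=
  forall p p' q q', VP p -> VP p' -> VQ q -> VQ q' -> p <> p' -> q <> q' ->
    e p q -> e p q' -> e p' q -> e p' q' -> False.

Definition cycle6_free P Q (VP : P -> Prop) (VQ : Q -> Prop) (e : P -> Q -> Prop) :=
  forall p1 p2 p3 q1 q2 q3, VP p1 -> VP p2 -> VP p3 -> VQ q1 -> VQ q2 -> VQ q3 ->
    p1 <> p2 -> p2 <> p3 -> p1 <> p3 -> q1 <> q2 -> q2 <> q3 -> q1 <> q3 ->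
    e p1 q1 -> e p2 q1 -> e p2 q2 -> e p3 q2 -> e p3 q3 -> e p1 q3 -> False.

Definition common_neighbours P Q (VP : P -> Prop) (VQ : Q -> Prop) (e : P -> Q -> Prop) :=
  forall p p', VP p -> VP p' -> p <> p' -> exists q, [/\ VQ q, e p q & e p' q].

Definition no_isolated P Q (VP : P -> Prop) (VQ : Q -> Prop) (e : P -> Q -> Prop) :=
  forall p, VP p -> exists q, VQ q /\ e p q.

Notation transpose e := (fun q p => e p q).

Lemma subsingleton_or_pair T (V : T -> Prop) :
  (forall x y, V x -> V y -> x = y) \/ exists x y, [/\ V x, V y & x <> y].
Proof.
case: (pselect (exists x y, [/\ V x, V y & x <> y])) => [|no_pair]; first by right.
by left=> x y Vx Vy; apply: contrapT => nxy; apply: no_pair; exists x, y.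
Qed.

Section BipartiteGraph.
Variables (P Q : Type) (VP : P -> Prop) (VQ : Q -> Prop).

Lemma double_star_sym (e : P -> Q -> Prop) :
  double_star VP VQ e -> double_star VQ VP (transpose e).
Proof.
move=> [p0 [q0 [Vp0 Vq0 star]]]; exists q0, p0; split=> // q p Vq Vp.
by rewrite star //; tauto.
Qed.

Lemma eq_double_star (VP' : P -> Prop) (VQ' : Q -> Prop) (e e' : P -> Q -> Prop) :
  (forall p, VP p <-> VP' p) -> (forall q, VQ q <-> VQ' q) ->
  (forall p q, VP p -> VQ q -> e p q <-> e' p q) ->
  double_star VP VQ e -> double_star VP' VQ' e'.
Proof.
move=> VPP' VQQ' ee' [p0 [q0 [Vp0 Vq0 star]]].
exists p0, q0; split=> [||p q /VPP' Vp /VQQ' Vq]; [exact/VPP' | exact/VQQ' |].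
by rewrite -ee' // star.
Qed.

Lemma double_star_bij Q' (VQ' : Q' -> Prop) (e : P -> Q -> Prop)
    (e' : P -> Q' -> Prop) (g : Q -> Q') :
  (forall q, VQ q -> VQ' (g q)) ->
  (forall q', VQ' q' -> exists2 q, VQ q & g q = q') ->
  (forall q q', VQ q -> VQ q' -> g q = g q' -> q = q') ->
  (forall p q, VP p -> VQ q -> e p q <-> e' p (g q)) ->
  double_star VP VQ e -> double_star VP VQ' e'.
Proof.
move=> gV g_onto g_inj ee' [p0 [q0 [Vp0 Vq0 star]]]; exists p0, (g q0).
split=> [||p _ Vp /g_onto [q Vq <-]]; [by []|exact: gV|].
have gq_q0 : g q = g q0 <-> q = q0 by split=> [/(g_inj _ _ Vq Vq0)|->].
by rewrite -ee' // star // -gq_q0.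
Qed.

Lemma double_star_subsingleton (e : P -> Q -> Prop) :
  no_isolated VP VQ e -> no_isolated VQ VP (transpose e) ->
  (exists p, VP p) -> (forall p p', VP p -> VP p' -> p = p') ->
  double_star VP VQ e.
Proof.
move=> nisoP nisoQ [p0 Vp0] single; have [q0 [Vq0 _]] := nisoP p0 Vp0.
exists p0, q0; split=> // p q Vp Vq; rewrite (single p p0) //.
split=> [_|_]; first by left.
by have [p' [Vp' ep'q]] := nisoQ q Vq; rewrite -(single p' p0).
Qed.

Lemma common_neighbour_universal (e : P -> Q -> Prop) :
  cycle4_free VP VQ e -> cycle6_free VP VQ e -> common_neighbours VP VQ e ->
  forall q x y, VQ q -> VP x -> VP y -> x <> y -> e x q -> e y q ->
  forall z, VP z -> e z q.
Proof.
move=> no4 no6 common q x y Vq Vx Vy nxy exq eyq z Vz; apply: contrapT => nezq.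
have nxz : x <> z by move=> E; subst.
have nyz : y <> z by move=> E; subst.
have [c [Vc exc ezc]] := common x z Vx Vz nxz.
have [c' [Vc' eyc' ezc']] := common y z Vy Vz nyz.
have nqc : q <> c by move=> E; subst.
have nqc' : q <> c' by move=> E; subst.
have nc'c : c' <> c.
  by move=> E; subst c'; apply: (no4 x y q c).
exact: (no6 x y z q c' c).
Qed.

End BipartiteGraph.

Lemma cycle4_free_sym P Q (VP : P -> Prop) (VQ : Q -> Prop) (e : P -> Q -> Prop) :
  cycle4_free VP VQ e -> cycle4_free VQ VP (transpose e).
Proof. by move=> no4 q q' p p' *; apply: (no4 p p' q q'). Qed.

Lemma cycle6_free_sym P Q (VP : P -> Prop) (VQ : Q -> Prop) (e : P -> Q -> Prop) :
  cycle6_free VP VQ e -> cycle6_free VQ VP (transpose e).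
Proof.
move=> no6 q1 q2 q3 p1 p2 p3 *; apply: (no6 p1 p2 p3 q2 q3 q1) => //;
  by [move=> E; subst | auto].
Qed.

Lemma pair_eq_iff (S T : Type) (s s' : S) (t t' : T) :
  (s, t) = (s', t') <-> s = s' /\ t = t'.
Proof. by split=> [[-> ->]|[-> ->]]. Qed.

Lemma double_star_of_cycle_free P Q (VP : P -> Prop) (VQ : Q -> Prop)
    (e : P -> Q -> Prop) :
  no_isolated VP VQ e -> no_isolated VQ VP (transpose e) -> (exists p, VP p) ->
  common_neighbours VP VQ e -> common_neighbours VQ VP (transpose e) ->
  cycle4_free VP VQ e -> cycle6_free VP VQ e -> double_star VP VQ e.
Proof.
move=> nisoP nisoQ [p Vp] commonP commonQ no4 no6.
have [singleP|[p1 [p2 [Vp1 Vp2 np]]]] := subsingleton_or_pair VP.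
  by apply: double_star_subsingleton => //; exists p.
have [singleQ|[q1 [q2 [Vq1 Vq2 nq]]]] := subsingleton_or_pair VQ.
  apply: (double_star_sym (e := transpose e)); apply: double_star_subsingleton => //.
  by have [q [Vq _]] := nisoP p Vp; exists q.
have [b [Vb ep1b ep2b]] := commonP p1 p2 Vp1 Vp2 np.
have [a [Va eaq1 eaq2]] := commonQ q1 q2 Vq1 Vq2 nq.
have to_b := common_neighbour_universal no4 no6 commonP Vb Vp1 Vp2 np ep1b ep2b.
have from_a := common_neighbour_universal (cycle4_free_sym no4) (cycle6_free_sym no6)
  commonQ Va Vq1 Vq2 nq eaq1 eaq2.
exists a, b; split=> // x y Vx Vy; split=> [exy|[->|->]]; last 2 first.
- exact: from_a.
- exact: to_b.
apply: contrapT; rewrite not_orE => -[nxa nyb].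
by apply: (no4 x a y b) => //; [apply: to_b | apply: from_a | apply: from_a].
Qed.

(* The passage from [E_{i,j}(w)] to [E_{i,j+1}(w)]: [q] is a right extension
   [v] of [w] and [c] a right letter of [w v]. *)
Lemma double_star_sigma P Q C (VP : P -> Prop) (VQ : Q -> Prop) (e : P -> Q -> Prop)
    (VC : Q -> C -> Prop) (f : Q -> P -> C -> Prop) :
  double_star VP VQ e ->
  (forall q, VQ q -> double_star (fun p => VP p /\ e p q) (VC q) (f q)) ->
  (forall q1 c1 q2 c2, VQ q1 -> VC q1 c1 -> VQ q2 -> VC q2 c2 -> q1 <> q2 ->
     exists p, [/\ VP p, e p q1 /\ f q1 p c1 & e p q2 /\ f q2 p c2]) ->
  double_star VP (fun qc : Q * C => VQ qc.1 /\ VC qc.1 qc.2)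
    (fun p qc => e p qc.1 /\ f qc.1 p qc.2).
Proof.
move=> [p0 [q0 [Vp0 Vq0 star]]] fibre mixing.
have [p1 [c1 [[Vp1 _] Vc1 star1]]] := fibre q0 Vq0.
have e_q0 p : VP p -> e p q0 by move=> Vp; apply/star => //; right.
have edge_q0 p c : VP p -> VC q0 c -> e p q0 /\ f q0 p c <-> p = p1 \/ c = c1.
  by move=> Vp Vc; rewrite -star1 //; have := e_q0 p Vp; tauto.
have edge_off q : VQ q -> q <> q0 ->
    forall p c, VP p -> VC q c -> e p q /\ f q p c <-> p = p0.
  move=> Vq nq p c Vp Vc; have [pq [cq [[Vpq epq] _ starq]]] := fibre q Vq.
  have pq0 : pq = p0 by have := star pq q Vpq Vq; tauto.
  have ep0q : e p0 q by apply/star => //; left.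
  rewrite star //; split=> [[[]//]|->]; split; [by left | apply/starq => //].
  by left.
have [only_q0|] := pselect (forall q, VQ q -> q = q0).
  exists p1, (q0, c1); split=> // p [q c] Vp [/= Vq Vc].
  move: Vc; rewrite (only_q0 q Vq) => Vc.
  by rewrite edge_q0 // pair_eq_iff; tauto.
move=> /existsNP [q /not_implyP [Vq nq]].
have collapse : p1 = p0 \/ forall c, VC q0 c -> c = c1.
  apply: contrapT; rewrite not_orE => -[np /existsNP [c /not_implyP [Vc nc]]].
  have [_ [cq [_ Vcq _]]] := fibre q Vq.
  have [p [Vp e1 e2]] := mixing q0 c q cq Vq0 Vc Vq Vcq (nesym nq).
  have pp0 : p = p0 by apply/(edge_off q Vq nq p cq).
  by subst p; case: (proj1 (edge_q0 p0 c Vp Vc) e1) => [/esym|].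
exists p0, (q0, c1); split=> // p [q' c] Vp [/= Vq' Vc].
case: (pselect (q' = q0)) => [eq'|nq'].
  subst q'; rewrite edge_q0 // pair_eq_iff.
  by case: collapse => [<-|all_c1]; [|have := all_c1 c Vc]; tauto.
by rewrite edge_off // pair_eq_iff; tauto.
Qed.

Lemma nonincreasing_eventually_constant (c : nat -> nat) m :
  (forall n, m <= n -> c n.+1 <= c n) ->
  exists2 N, m <= N & forall n, N <= n -> c n = c N.
Proof.
move=> c_dec.
have c_mono n n' : m <= n <= n' -> c n' <= c n.
  case/andP=> mn; elim: n' => [|n' IH]; first by rewrite leqn0 => /eqP ->.
  rewrite leq_eqVlt => /orP[/eqP <- //|]; rewrite ltnS => nn'.
  exact: leq_trans (c_dec n' (leq_trans mn nn')) (IH nn').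
pose attained v := `[< exists2 n, m <= n & c n = v >].
have attained_cm : exists v, attained v by exists (c m); apply/asboolP; exists m.
case: (ex_minnP attained_cm) => _ /asboolP [N mN <-] c_min.
exists N => // n Nn; apply/eqP; rewrite eqn_leq c_mono ?mN //=.
by apply: c_min; apply/asboolP; exists n => //; apply: leq_trans Nn.
Qed.

Lemma injections_eventually_onto (T : eqType) (S : nat -> seq T) (f : nat -> T -> T) m :
  (forall n, uniq (S n)) ->
  (forall n, m <= n -> {in S n.+1 &, injective (f n)}) ->
  (forall n, m <= n -> {subset map (f n) (S n.+1) <= S n}) ->
  exists2 N, m <= N & forall n, N <= n -> {subset S n <= map (f n) (S n.+1)}.
Proof.
move=> S_uniq f_inj f_into.
have image_uniq n : m <= n -> uniq (map (f n) (S n.+1)).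
  by move=> mn; rewrite map_inj_in_uniq //; exact: f_inj.
have size_dec n : m <= n -> size (S n.+1) <= size (S n).
  move=> mn; rewrite -(size_map (f n)).
  exact: uniq_leq_size (image_uniq n mn) (f_into n mn).
have [N mN size_const] := nonincreasing_eventually_constant size_dec.
exists N => // n Nn; have mn := leq_trans mN Nn.
have [|_ same] := uniq_min_size (image_uniq n mn) (f_into n mn); last first.
  by move=> t; rewrite same.
by rewrite size_map (size_const n) // (size_const n.+1) // leqW.
Qed.

Definition words (A : finType) n : seq (seq A) := [seq val t | t : n.-tuple A].

Lemma mem_words (A : finType) n (s : seq A) : (s \in words A n) = (size s == n).
Proof.
apply/mapP/idP => [[t _ ->]|/eqP sn]; first by rewrite size_tuple.
by exists (Tuple (introT eqP sn)); rewrite ?mem_enum.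
Qed.

Lemma uniq_words (A : finType) n : uniq (words A n).
Proof. by rewrite map_inj_uniq ?enum_uniq //; exact: val_inj. Qed.

Definition factor_closed A (L : seq A -> Prop) := forall u v, L (u ++ v) -> L u /\ L v.

Definition extendable A (L : seq A -> Prop) :=
  forall w, L w -> (exists a, L (a :: w)) /\ (exists a, L (rcons w a)).

Definition rev_lang A (L : seq A -> Prop) w := L (rev w).

(* [E_1(z)] has no 4-cycle as soon as [m <= size z]. *)
Definition ext1_cycle4_free A (L : seq A -> Prop) m :=
  forall z (a a' b b' : A), m <= size z -> a <> a' -> b <> b' ->
    L (a :: rcons z b) -> L (a :: rcons z b') ->
    L (a' :: rcons z b) -> L (a' :: rcons z b') -> False.

Definition joint_right_extensions A (L : seq A -> Prop) k N :=
  forall z u u', N <= size z -> size u = size u' -> size u <= k -> u <> u' ->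
    L (u ++ z) -> L (u' ++ z) ->
  forall j, exists v, [/\ size v = j, L (u ++ z ++ v) & L (u' ++ z ++ v)].

Definition joint_left_extensions A (L : seq A -> Prop) k N :=
  forall z v v', N <= size z -> size v = size v' -> size v <= k -> v <> v' ->
    L (z ++ v) -> L (z ++ v') ->
  forall i, exists u, [/\ size u = i, L (u ++ z ++ v) & L (u ++ z ++ v')].

Lemma cat_inj_sizel A (x x' u u' : seq A) :
  size x = size x' -> x ++ u = x' ++ u' -> x = x'.
Proof. by move=> sx E; rewrite -(take_size_cat u sx) E take_size_cat. Qed.

Lemma cat_inj_sizer A (x x' u u' : seq A) :
  size x = size x' -> x ++ u = x' ++ u' -> u = u'.
Proof. by move=> sx E; rewrite -(drop_size_cat u sx) E drop_size_cat. Qed.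

Lemma split_first_difference A (v v' : seq A) : size v = size v' -> v <> v' ->
  exists t c c' x x', [/\ c <> c', v = t ++ c :: x & v' = t ++ c' :: x'].
Proof.
elim: v v' => [|a v IH] [|a' v'] //= [sv].
have [<- {a'}|na] := pselect (a = a'); last by move=> _; exists [::], a, a', v, v'.
move=> nv; have nv' : v <> v' by move=> E; apply: nv; rewrite E.
have [t [c [c' [x [x' [nc -> ->]]]]]] := IH v' sv nv'.
by exists (a :: t), c, c', x, x'.
Qed.

Lemma split_last_difference A (u u' : seq A) : size u = size u' -> u <> u' ->
  exists x x' c c' t, [/\ c <> c', u = x ++ c :: t & u' = x' ++ c' :: t].
Proof.
move=> su nu.
have [||t [c [c' [x [x' [nc Eu Eu']]]]]] :=
  split_first_difference (v := rev u) (v' := rev u').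
- by rewrite !size_rev.
- by move=> /(congr1 rev); rewrite !revK.
exists (rev x), (rev x'), c, c', (rev t); split=> //.
  by rewrite -(revK u) Eu rev_cat rev_cons cat_rcons.
by rewrite -(revK u') Eu' rev_cat rev_cons cat_rcons.
Qed.

Section Language.
Variables (A : Type) (L : seq A -> Prop).
Hypotheses (L_fact : factor_closed L) (L_ext : extendable L).

Lemma factor_closed_prefix x y : L (x ++ y) -> L x.
Proof. by move=> /L_fact []. Qed.

Lemma factor_closed_suffix x y : L (x ++ y) -> L y.
Proof. by move=> /L_fact []. Qed.

Lemma extend_left w n : L w -> exists x, size x = n /\ L (x ++ w).
Proof.
move=> Lw; elim: n => [|n [x [sx Lxw]]]; first by exists [::].
by have [[a Laxw] _] := L_ext Lxw; exists (a :: x); rewrite /= sx.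
Qed.

Lemma rev_lang_factor_closed : factor_closed (rev_lang L).
Proof. by move=> u v; rewrite /rev_lang rev_cat => /L_fact []. Qed.

Lemma rev_lang_extendable : extendable (rev_lang L).
Proof.
move=> w /L_ext [[a Law] [b Lwb]]; rewrite /rev_lang.
by split; [exists b; rewrite rev_cons | exists a; rewrite rev_rcons].
Qed.

End Language.

Lemma rev_lang_ext1_cycle4_free A (L : seq A -> Prop) m :
  ext1_cycle4_free L m -> ext1_cycle4_free (rev_lang L) m.
Proof.
move=> no4 z a a' b b' mz na nb; rewrite /rev_lang.
have rev_ext x y : rev (x :: rcons z y) = y :: rcons (rev z) x.
  by rewrite rev_cons rev_rcons.
rewrite !rev_ext => *; apply: (no4 (rev z) b b' a a') => //; by rewrite size_rev.
Qed.

Lemma take_rcons_size A n (p : seq A) b : size p = n -> take n (rcons p b) = p.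
Proof. by move=> sp; rewrite -cats1 take_size_cat. Qed.

Lemma rcons_of_size_succ A n (z : seq A) :
  size z = n.+1 -> exists p b, z = rcons p b /\ size p = n.
Proof. by case/lastP: z => [//|p b]; rewrite size_rcons => -[sp]; exists p, b. Qed.

Section JointExtensions.
Variables (A : Type) (L : seq A -> Prop).
Hypotheses (L_fact : factor_closed L) (L_ext : extendable L).

Lemma joint_right_extensions_of_letters k N :
  (forall z u u', N <= size z -> size u = k -> size u' = k -> u <> u' ->
     L (u ++ z) -> L (u' ++ z) -> exists b, L (u ++ rcons z b) /\ L (u' ++ rcons z b)) ->
  joint_right_extensions L k N.
Proof.
move=> letter.
have letter_short z u u' : N <= size z -> size u = size u' -> size u <= k -> u <> u' ->
    L (u ++ z) -> L (u' ++ z) -> exists b, L (u ++ rcons z b) /\ L (u' ++ rcons z b).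
  move=> Nz su su_k nu Luz Lu'z.
  have [x [sx Lxuz]] := extend_left L_ext (k - size u) Luz.
  have [x' [sx' Lx'u'z]] := extend_left L_ext (k - size u) Lu'z.
  have nxu : x ++ u <> x' ++ u' by move=> /cat_inj_sizer; rewrite sx sx'; auto.
  have [||||b [Lb Lb']] := letter z (x ++ u) (x' ++ u') Nz _ _ nxu; rewrite -?catA //.
  - by rewrite size_cat sx subnK.
  - by rewrite size_cat sx' -su subnK.
  exists b; split; [move: Lb | move: Lb'];
    by rewrite -catA => /(factor_closed_suffix L_fact).
move=> z u u' Nz su su_k nu Luz Lu'z; elim=> [|j [v [sv Luzv Lu'zv]]].
  by exists [::]; rewrite !cats0.
have [|b [Lb Lb']] := letter_short (z ++ v) u u' _ su su_k nu Luzv Lu'zv.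
  by rewrite size_cat (leq_trans Nz) ?leq_addr.
by exists (rcons v b); rewrite size_rcons sv -rcons_cat.
Qed.

End JointExtensions.

Section Counting.
Variables (A : finType) (L : seq A -> Prop) (m : nat).
Hypotheses (L_fact : factor_closed L) (no4 : ext1_cycle4_free L m).

(* Deleting the last letter of [z] maps the triples [(u, u', z)] with
   [size z = n.+1] injectively to those with [size z = n]: two preimages would
   produce a 4-cycle in [E_1] of a suffix of [u z] of length at least [m].
   Hence the number of triples eventually stabilises, and deletion becomes onto. *)
Lemma right_letter_of_pairs k :
  exists2 N, m <= N & forall z u u', N <= size z -> size u = k -> size u' = k ->
    u <> u' -> L (u ++ z) -> L (u' ++ z) ->
  exists b, L (u ++ rcons z b) /\ L (u' ++ rcons z b).
Proof.
pose triple n (t : seq A * seq A * seq A) :=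
  [/\ size t.1.1 = k, size t.1.2 = k, size t.2 = n, t.1.1 <> t.1.2 &
      L (t.1.1 ++ t.2) /\ L (t.1.2 ++ t.2)].
pose S n := [seq t <- [seq (p, z) | p <- [seq (u, u') | u <- words A k, u' <- words A k],
                                    z <- words A n] | `[< triple n t >]].
pose del n (t : seq A * seq A * seq A) := (t.1, take n t.2).
have memS n t : t \in S n <-> triple n t.
  rewrite mem_filter; split=> [/andP[/asboolP] //|tr]; rewrite (asboolT tr) /=.
  case: t tr => [[u u'] z] [/= su su' sz _ _].
  apply/allpairsP; exists ((u, u'), z); rewrite /= mem_words sz; split=> //.
  by apply/allpairsP; exists (u, u'); rewrite /= !mem_words su su'.
have S_uniq n : uniq (S n).
  rewrite filter_uniq // allpairs_uniq ?uniq_words //;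
    last by move=> [? ?] [? ?] _ _ [-> ->].
  by rewrite allpairs_uniq ?uniq_words // => [[? ?] [? ?] _ _ [-> ->]].
have del_inj n : m <= n -> {in S n.+1 &, injective (del n)}.
  move=> mn [[u u'] z1] [[u2 u2'] z2].
  move=> /memS[/= su su' /rcons_of_size_succ[p [b1 [-> sp]]] nu [L1 L1']].
  move=> /memS[/= _ _ /rcons_of_size_succ[p2 [b2 [-> sp2]]] _ [L2 L2']] [/= eu eu'].
  rewrite !take_rcons_size // => ep; subst u2 u2' p2.
  have [<- //|nb] := pselect (b1 = b2); exfalso.
  have [x [x' [c [c' [t [nc Eu Eu']]]]]] := split_last_difference (etrans su (esym su')) nu.
  have tail x0 c0 (u0 : seq A) b : u0 = x0 ++ c0 :: t -> L (u0 ++ rcons p b) ->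
      L (c0 :: rcons (t ++ p) b).
    by move=> ->; rewrite -catA rcons_cat => /(factor_closed_suffix L_fact).
  apply: (no4 (z := t ++ p) _ nc nb).
  - by rewrite size_cat sp (leq_trans mn) ?leq_addl.
  - exact: tail Eu L1.
  - exact: tail Eu L2.
  - exact: tail Eu' L1'.
  - exact: tail Eu' L2'.
have del_into n : m <= n -> {subset map (del n) (S n.+1) <= S n}.
  move=> _ _ /mapP[[[u u'] z] /memS[/= su su' sz nu [Luz Lu'z]] ->]; apply/memS.
  have pre (v : seq A) : L (v ++ z) -> L (v ++ take n z).
    by rewrite -{1}(cat_take_drop n z) catA => /(factor_closed_prefix L_fact).
  by split=> //=; [rewrite size_takel ?sz | split; apply: pre].
have [N mN del_onto] := injections_eventually_onto S_uniq del_inj del_into.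
exists N => // z u u' Nz su su' nu Luz Lu'z.
have /memS Sz : triple (size z) (u, u', z) by [].
have /mapP[[[? ?] z'] /memS[/= _ _ sz' _ [Lz Lz']] [-> -> E]] := del_onto _ Nz _ Sz.
move: sz' Lz Lz' E => /rcons_of_size_succ[p [b [-> sp]]].
rewrite take_rcons_size // => L1 L2 ->.
by exists b.
Qed.

End Counting.

Lemma joint_extensions (A : finType) (L : seq A -> Prop) m k :
  factor_closed L -> extendable L -> ext1_cycle4_free L m ->
  exists2 N, m <= N & joint_right_extensions L k N /\ joint_left_extensions L k N.
Proof.
move=> L_fact L_ext no4.
have revL_fact := rev_lang_factor_closed L_fact.
have [NR mNR letterR] := right_letter_of_pairs L_fact no4 k.
have [NL mNL letterL] := right_letter_of_pairs revL_fact (rev_lang_ext1_cycle4_free no4) k.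
have jointR N : maxn NR NL <= N -> joint_right_extensions L k N.
  move=> le; apply: (joint_right_extensions_of_letters L_fact L_ext) => z u u' Nz.
  by apply: letterR; rewrite (leq_trans _ Nz) // (leq_trans _ le) ?leq_maxl.
have jointR_rev N : maxn NR NL <= N -> joint_right_extensions (rev_lang L) k N.
  move=> le.
  apply: (joint_right_extensions_of_letters revL_fact (rev_lang_extendable L_ext)).
  move=> z u u' Nz; apply: letterL.
  by rewrite (leq_trans _ Nz) // (leq_trans _ le) ?leq_maxr.
exists (maxn NR NL); first by rewrite leq_max mNR.
split; first exact: jointR.
move=> z v v' Nz sv sv_k nv Lzv Lzv' i.
have nrv : rev v <> rev v' by move=> /(congr1 rev); rewrite !revK.
have [|||||x [sx Lx Lx']] :=
    jointR_rev _ (leqnn _) (rev z) (rev v) (rev v') _ _ _ nrv _ _ i;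
  rewrite /rev_lang ?size_rev -?rev_cat ?revK //.
by exists (rev x); move: Lx Lx'; rewrite /rev_lang !rev_cat !revK -!catA size_rev.
Qed.

Definition lext A (L : seq A -> Prop) i w u := size u = i /\ L (u ++ w).
Definition rext A (L : seq A -> Prop) j w v := size v = j /\ L (w ++ v).
Definition bext A (L : seq A -> Prop) w u v := L (u ++ w ++ v).
Definition ext_double_star A (L : seq A -> Prop) i j w :=
  double_star (lext L i w) (rext L j w) (bext L w).

Lemma ext1_cycle4_free_of_graphs A (L : seq A -> Prop) m : factor_closed L ->
  (forall w, m <= size w -> L w -> cycle4_free (lext L 1 w) (rext L 1 w) (bext L w)) ->
  ext1_cycle4_free L m.
Proof.
move=> L_fact no4 z a a' b b' mz na nb; rewrite -!cats1 => Lab Lab' La'b La'b'.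
have Lz : L z.
  move: Lab => /(factor_closed_suffix L_fact (x := [:: a])).
  by move=> /(factor_closed_prefix L_fact).
apply: (no4 z mz Lz [:: a] [:: a'] [:: b] [:: b']) => //; try by case.
- by split=> //; apply: (factor_closed_prefix L_fact (y := [:: b])); rewrite -catA.
- by split=> //; apply: (factor_closed_prefix L_fact (y := [:: b])); rewrite -catA.
- by split=> //; apply: (factor_closed_suffix L_fact (x := [:: a])).
- by split=> //; apply: (factor_closed_suffix L_fact (x := [:: a])).
Qed.

Section ExtensionGraphs.
Variables (A : Type) (L : seq A -> Prop) (k N : nat).
Hypotheses (L_fact : factor_closed L) (L_ext : extendable L).
Hypotheses (jointR : joint_right_extensions L k N) (jointL : joint_left_extensions L k N).

Let prefix x y : L (x ++ y) -> L x := @factor_closed_prefix _ _ L_fact x y.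
Let suffix x y : L (x ++ y) -> L y := @factor_closed_suffix _ _ L_fact x y.

Lemma ext1_double_star w : 0 < k -> N <= size w -> L w ->
  cycle4_free (lext L 1 w) (rext L 1 w) (bext L w) ->
  cycle6_free (lext L 1 w) (rext L 1 w) (bext L w) ->
  ext_double_star L 1 1 w.
Proof.
move=> k_gt0 Nw Lw no4 no6; apply: double_star_of_cycle_free => //.
- move=> u [su Luw]; have [_ [a]] := L_ext Luw; rewrite -cats1 -catA => Luwa.
  by exists [:: a]; split=> //; split=> //; exact: suffix Luwa.
- move=> v [sv Lwv]; have [[a Lawv] _] := L_ext Lwv.
  by exists [:: a]; split=> //; split=> //; exact: (@prefix (a :: w) v).
- by have [[a Law] _] := L_ext Lw; exists [:: a].
- move=> u u' [su Luw] [su' Lu'w] nu.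
  have [|v [sv L1 L2]] := jointR Nw (etrans su (esym su')) _ nu Luw Lu'w 1; rewrite ?su //.
  by exists v; split=> //; split=> //; exact: (@suffix u).
- move=> v v' [sv Lwv] [sv' Lwv'] nv.
  have [|u [su L1 L2]] := jointL Nw (etrans sv (esym sv')) _ nv Lwv Lwv' 1; rewrite ?sv //.
  by exists u; split=> //; split=> //; apply: (@prefix _ v); rewrite -catA.
Qed.

Lemma ext_double_star_rext_succ i j w : N <= size w -> j < k ->
  ext_double_star L i j w ->
  (forall v, rext L j w v -> ext_double_star L i 1 (w ++ v)) ->
  ext_double_star L i j.+1 w.
Proof.
move=> Nw jk star_w star_wv.
have star_pairs : double_star (lext L i w)
    (fun vc => rext L j w vc.1 /\ rext L 1 (w ++ vc.1) vc.2)
    (fun u vc => bext L w u vc.1 /\ bext L (w ++ vc.1) u vc.2).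
  apply: (double_star_sigma (VC := fun v => rext L 1 (w ++ v))
    (f := fun v => bext L (w ++ v)) star_w)
    => [v wv|v1 c1 v2 c2 [sv1 _] [sc1 L1] [sv2 _] [sc2 L2] nv].
    apply: eq_double_star (star_wv v wv) => // u.
    rewrite /lext /bext; split=> [[su Luwv]|[[su _] Luwv]] //.
    by split=> //; split=> //; apply: (@prefix _ v); rewrite -catA.
  have nvc : v1 ++ c1 <> v2 ++ c2 by move=> /cat_inj_sizel; rewrite sv1 sv2; auto.
  have [||||u [su Lu1 Lu2]] := jointL Nw _ _ nvc _ _ i.
  - by rewrite !size_cat sv1 sv2 sc1 sc2.
  - by rewrite size_cat sv1 sc1 addn1.
  - by rewrite catA.
  - by rewrite catA.
  move: Lu1 Lu2; rewrite /bext /lext -!catA => Lu1 Lu2.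
  have drop_last x y : L (u ++ w ++ x ++ y) -> L (u ++ w ++ x).
    by move=> Lxy; apply: (@prefix _ y); rewrite -!catA.
  exists u; split=> //; last by split=> //; apply: drop_last Lu2.
  - by split=> //; apply: (@prefix _ (v1 ++ c1)); rewrite -catA.
  - by split=> //; apply: drop_last Lu1.
apply: (double_star_bij (g := fun vc => vc.1 ++ vc.2) _ _ _ _ star_pairs).
- move=> [v c] [[sv _] [sc Lwvc]] /=.
  by split; [rewrite size_cat sv sc addn1 | rewrite catA].
- move=> v' [sv' Lwv']; exists (take j v', drop j v'); last exact: cat_take_drop.
  have Lw_v' : L ((w ++ take j v') ++ drop j v') by rewrite -catA cat_take_drop.
  split; split=> /=; [by rewrite size_takel ?sv' | exact: prefix Lw_v' |
    by rewrite size_drop sv' subSnn | exact: Lw_v'].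
- move=> [v c] [v' c'] [[sv _] [sc _]] [[sv' _] [sc' _]] /= E.
  have sv_v' : size v = size v' by rewrite sv sv'.
  by rewrite (cat_inj_sizel sv_v' E) (cat_inj_sizer sv_v' E).
move=> u [v c] _ _; rewrite /bext /= -!catA; split=> [[] //|Luwvc].
by split=> //; apply: (@prefix _ c); rewrite -!catA.
Qed.

Lemma ext_double_star_lext_succ i w : N <= size w -> i < k ->
  ext_double_star L i 1 w ->
  (forall u, lext L i w u -> ext_double_star L 1 1 (u ++ w)) ->
  ext_double_star L i.+1 1 w.
Proof.
move=> Nw ik star_w star_uw.
have star_pairs : double_star (rext L 1 w)
    (fun ua => lext L i w ua.1 /\ lext L 1 (ua.1 ++ w) ua.2)
    (fun c ua => bext L w ua.1 c /\ bext L (ua.1 ++ w) ua.2 c).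
  apply: (double_star_sigma (VC := fun u => lext L 1 (u ++ w))
    (f := fun u c a => bext L (u ++ w) a c) (double_star_sym star_w))
    => [u wu|u1 a1 u2 a2 [su1 _] [sa1 L1] [su2 _] [sa2 L2] nu].
    apply: eq_double_star (double_star_sym (star_uw u wu)) => // c.
    rewrite /rext /bext; split=> [[sc]|[[sc _]]]; rewrite -catA => Luwc //.
    by split=> //; split=> //; exact: (@suffix u).
  have nua : a1 ++ u1 <> a2 ++ u2 by move=> /cat_inj_sizer; rewrite sa1 sa2; auto.
  have [||||c [sc Lc1 Lc2]] := jointR Nw _ _ nua _ _ 1.
  - by rewrite !size_cat su1 su2 sa1 sa2.
  - by rewrite size_cat su1 sa1.
  - by rewrite -catA.
  - by rewrite -catA.
  move: Lc1 Lc2; rewrite /bext -!catA => Lc1 Lc2.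
  exists c; rewrite -!catA; split; [split=> // | split=> // | split=> //].
  - by apply: (@suffix (a1 ++ u1)); rewrite -catA.
  - exact: (@suffix a1).
  - exact: (@suffix a2).
apply: (double_star_sym (e := transpose (bext L w))).
apply: (double_star_bij (g := fun ua => ua.2 ++ ua.1) _ _ _ _ star_pairs).
- move=> [u a] [[su _] [sa Lauw]] /=.
  by split; [rewrite size_cat su sa | rewrite -catA].
- move=> u' [su' Lu'w]; exists (drop 1 u', take 1 u'); last exact: cat_take_drop.
  have Lu'_w : L (take 1 u' ++ drop 1 u' ++ w) by rewrite catA cat_take_drop.
  split; split=> /=; [by rewrite size_drop su' subn1 | exact: (@suffix (take 1 u')) |
    by rewrite size_takel ?su' | by rewrite catA cat_take_drop].
- move=> [u a] [u' a'] [[su _] [sa _]] [[su' _] [sa' _]] /= E.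
  have sa_a' : size a = size a' by rewrite sa sa'.
  by rewrite (cat_inj_sizel sa_a' E) (cat_inj_sizer sa_a' E).
move=> c [u a] _ _; rewrite /bext /= -!catA; split=> [[] //|Lauwc].
by split=> //; apply: (@suffix a).
Qed.

Lemma ext_double_star_all : 0 < k ->
  (forall w, N <= size w -> L w -> ext_double_star L 1 1 w) ->
  forall w, N <= size w -> L w -> ext_double_star L k k w.
Proof.
move=> k_gt0 base.
have long_cat (x y : seq A) : N <= size y -> N <= size (x ++ y) /\ N <= size (y ++ x).
  move=> Ny; rewrite !size_cat.
  by split; apply: leq_trans Ny _; rewrite ?leq_addl ?leq_addr.
have lext_ok i : 0 < i <= k -> forall w, N <= size w -> L w -> ext_double_star L i 1 w.
  elim: i => [//|[_ _|i IH /andP[_ ik]] w' Nw' Lw']; first exact: base.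
  apply: ext_double_star_lext_succ => //; first exact: IH (ltnW ik) _ Nw' Lw'.
  by move=> u [_ Luw]; apply: base Luw; case: (long_cat u w' Nw').
have rext_ok j : 0 < j <= k -> forall w, N <= size w -> L w -> ext_double_star L k j w.
  elim: j => [//|[_ _|j IH /andP[_ jk]] w' Nw' Lw'].
    by apply: lext_ok => //; rewrite k_gt0 leqnn.
  apply: ext_double_star_rext_succ => //; first exact: IH (ltnW jk) _ Nw' Lw'.
  move=> v [_ Lwv]; apply: lext_ok Lwv; first by rewrite k_gt0 leqnn.
  by case: (long_cat v w' Nw').
by move=> w; apply: rext_ok; rewrite k_gt0 leqnn.
Qed.

End ExtensionGraphs.

(* [ext_vertex X k w] and [ext_edge X w] unfold to [bip_vertex] and [bip_edge]
   of [lext (inL X) k w], [rext (inL X) k w] and [bext (inL X) w]. *)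
Definition bip_vertex P Q (VP : P -> Prop) (VQ : Q -> Prop) (a : P + Q) : Prop :=
  match a with
  | inl p => VP p
  | inr q => VQ q
  end.

Definition bip_edge P Q (e : P -> Q -> Prop) (a b : P + Q) : Prop :=
  match a, b with
  | inl p, inr q => e p q
  | inr q, inl p => e p q
  | _, _ => False
  end.

Lemma all_V_cons (T : eqType) (V : T -> Prop) x s : V x -> all_V V s -> all_V V (x :: s).
Proof. by move=> Vx Vs y; rewrite inE => /orP[/eqP ->|/Vs]. Qed.

Lemma not_three_in_pair (T : Type) (a b x y z : T) : x <> y -> y <> z -> x <> z ->
  x = a \/ x = b -> y = a \/ y = b -> z = a \/ z = b -> False.
Proof. by move=> nxy nyz nxz [] ? [] ? [] ?; subst. Qed.

Section BipartiteTree.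
Variables (P Q : eqType) (VP : P -> Prop) (VQ : Q -> Prop) (e : P -> Q -> Prop).
Local Notation V := (bip_vertex VP VQ).
Local Notation E := (bip_edge e).

Lemma bip_edge_sym a b : E a b -> E b a.
Proof. by case: a b => [?|?] [?|?]. Qed.

Lemma tree_cycle_free : is_tree V E -> cycle4_free VP VQ e /\ cycle6_free VP VQ e.
Proof.
case=> _ no_cycle; split.
  move=> p p' q q' Vp Vp' Vq Vq' /eqP np /eqP nq *; apply: no_cycle.
  exists (inl p), [:: inr q; inl p'; inr q']; split=> //.
    by do !apply: all_V_cons => //.
  by rewrite /= !inE -!sum_eqE /= (negbTE np) (negbTE nq).
move=> p1 p2 p3 q1 q2 q3 Vp1 Vp2 Vp3 Vq1 Vq2 Vq3 /eqP n12 /eqP n23 /eqP n13.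
move=> /eqP m12 /eqP m23 /eqP m13 *; apply: no_cycle.
exists (inl p1), [:: inr q1; inl p2; inr q2; inl p3; inr q3]; split=> //.
  by do !apply: all_V_cons => //.
rewrite /= !inE -!sum_eqE /= (negbTE n12) (negbTE n23) (negbTE n13).
by rewrite (negbTE m12) (negbTE m23) (negbTE m13).
Qed.

Section DoubleStarTree.
Variables (p0 : P) (q0 : Q).
Hypotheses (Vp0 : VP p0) (Vq0 : VQ q0).
Hypothesis star : forall p q, VP p -> VQ q -> e p q <-> p = p0 \/ q = q0.

Lemma star_centre x y z : V x -> V y -> V z -> y <> z -> E x y -> E x z ->
  x = inl p0 \/ x = inr q0.
Proof.
case: x y z => [p|q] [p1|q1] [p2|q2] //= Vx Vy Vz nyz exy exz.
  left; congr inl; apply: contrapT => np.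
  have [/np//|eq1] := proj1 (star Vx Vy) exy.
  have [/np//|eq2] := proj1 (star Vx Vz) exz.
  by apply: nyz; rewrite eq1 eq2.
right; congr inr; apply: contrapT => nq.
have [eq1|/nq//] := proj1 (star Vy Vx) exy.
have [eq2|/nq//] := proj1 (star Vz Vx) exz.
by apply: nyz; rewrite eq1 eq2.
Qed.

Lemma star_connected : connected V E.
Proof.
have to_q0 p : VP p -> E (inl p) (inr q0) by move=> Vp; apply/star => //; right.
have from_p0 q : VQ q -> E (inl p0) (inr q) by move=> Vq; apply/star => //; left.
case=> [p|q] [p'|q'] Va Vb.
- exists [:: inr q0; inl p']; split; first by do !apply: all_V_cons => //.
  by split=> //=; split; [exact: to_q0 | split=> //; exact: to_q0].
- exists [:: inr q0; inl p0; inr q']; split; first by do !apply: all_V_cons => //.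
  by split=> //=; do !split; by [exact: to_q0 | exact: from_p0].
- exists [:: inl p0; inr q0; inl p']; split; first by do !apply: all_V_cons => //.
  by split=> //=; do !split; by [exact: to_q0 | exact: from_p0].
- exists [:: inl p0; inr q']; split; first by do !apply: all_V_cons => //.
  by split=> //=; split; [exact: from_p0 | split=> //; exact: from_p0].
Qed.

Lemma star_acyclic : acyclic V E.
Proof.
move=> [x [p [Vs]]]; case: p Vs => [|y [|z r]] // Vs.
rewrite [uniq _]/= !inE => /and3P[/norP[/eqP nxy /norP[/eqP nxz x_r]]].
move=> /norP[/eqP nyz y_r] _.
move=> _ [exy [eyz ezr]] elx.
have Vin a : a \in [:: x, y, z & r] -> V a by exact: Vs.
have [Vx Vy Vz] : [/\ V x, V y & V z] by split; apply: Vin; rewrite !inE eqxx ?orbT.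
have Vl : V (last z r) by apply: Vin; rewrite (in_cons x) (in_cons y) mem_last !orbT.
have nyl : y <> last z r.
  by move=> eyl; move: (mem_last z r); rewrite -eyl inE (negbTE y_r) orbF => /eqP.
have cx := star_centre Vx Vy Vl nyl exy (bip_edge_sym elx).
have cy := star_centre Vy Vx Vz nxz (bip_edge_sym exy) eyz.
have cz : z = inl p0 \/ z = inr q0.
  case: r Vs x_r y_r Vin ezr elx {Vl nyl cx} => [|t r] _ _ y_r Vin ezr elx.
    exact: star_centre Vz Vy Vx (nesym nxy) (bip_edge_sym eyz) elx.
  have nyt : y <> t by move=> eyt; move: y_r; rewrite eyt !inE eqxx.
  apply: star_centre Vz Vy (Vin t _) nyt (bip_edge_sym eyz) (proj1 ezr).
  by rewrite !inE eqxx !orbT.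
exact: not_three_in_pair nxy nyz nxz cx cy cz.
Qed.

Lemma star_diam_le3 : diam_le3 V E.
Proof.
move=> x p [Vs un ep]; rewrite leqNgt; apply/negP => long.
case: p Vs un ep long => [|y [|z [|t [|s r]]]] // Vs.
rewrite [uniq _]/= !inE => /and4P[/norP[_ /norP[/eqP nxz _]]].
move=> /norP[/eqP nyz /norP[/eqP nyt _]] /norP[/eqP nzt /norP[/eqP nzs _]] _.
move=> [exy [eyz [ezt [ets _]]]] _.
have Vin a : a \in [:: x, y, z, t, s & r] -> V a by exact: Vs.
have [Vx Vy Vz] : [/\ V x, V y & V z] by split; apply: Vin; rewrite !inE eqxx ?orbT.
have [Vt Vs'] : V t /\ V s by split; apply: Vin; rewrite !inE eqxx ?orbT.
have cy := star_centre Vy Vx Vz nxz (bip_edge_sym exy) eyz.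
have cz := star_centre Vz Vy Vt nyt (bip_edge_sym eyz) ezt.
have ct := star_centre Vt Vz Vs' nzs (bip_edge_sym ezt) ets.
exact: not_three_in_pair nyz nzt nyt cy cz ct.
Qed.

End DoubleStarTree.
End BipartiteTree.

Lemma double_star_simple_tree (P Q : eqType) (VP : P -> Prop) (VQ : Q -> Prop)
    (e : P -> Q -> Prop) :
  double_star VP VQ e -> simple_tree (bip_vertex VP VQ) (bip_edge e).
Proof.
move=> [p0 [q0 [Vp0 Vq0 star]]]; split; last exact: star_diam_le3 star.
by split; [exact: star_connected star | exact: star_acyclic star].
Qed.

Section ShiftSpace.
Variables (A : finType) (X : config A -> Prop).

Lemma size_factor_at (x : config A) i n : size (factor_at x i n) = n.
Proof. by rewrite size_map size_iota. Qed.

Lemma factor_at_add (x : config A) i n n' :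
  factor_at x i (n + n') = factor_at x i n ++ factor_at x (i + n%:Z)%R n'.
Proof.
rewrite /factor_at iotaD map_cat add0n -[in iota n _](addn0 n) iotaDl -map_comp.
by congr (_ ++ _); apply: eq_map => j /=; rewrite PoszD addrA.
Qed.

Lemma inL_factor_closed : factor_closed (inL X).
Proof.
move=> u v [x [i [Xx]]]; rewrite size_cat factor_at_add => E.
have su : size u = size (factor_at x i (size u)) by rewrite size_factor_at.
split; exists x; first by exists i; split=> //; apply: cat_inj_sizel E.
by exists (i + (size u)%:Z)%R; split=> //; apply: cat_inj_sizer E.
Qed.

Lemma inL_extendable : extendable (inL X).
Proof.
move=> w [x [i [Xx E]]]; split.
  exists (x (i - 1 + 0)%R), x, (i - 1)%R; split=> //.
  by rewrite /= -add1n factor_at_add subrK -E.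
exists (x (i + (size w)%:Z + 0)%R), x, i; split=> //.
by rewrite size_rcons -addn1 factor_at_add -E -cats1.
Qed.

End ShiftSpace.

Theorem mainTheorem8 (A : finType) (X : config A -> Prop) :
  shift_space X -> eventually_dendric X ->
  forall k : nat, 1 <= k ->
    exists n : nat, 1 <= n /\
      forall w : seq A, inL X w -> n <= size w ->
        simple_tree (ext_vertex X k w) (ext_edge X w).
Proof.
move=> _ [m dendric] k k_gt0.
have L_fact := @inL_factor_closed A X; have L_ext := @inL_extendable A X.
have cycle_free w : m <= size w -> inL X w ->
    cycle4_free (lext (inL X) 1 w) (rext (inL X) 1 w) (bext (inL X) w) /\
    cycle6_free (lext (inL X) 1 w) (rext (inL X) 1 w) (bext (inL X) w).
  by move=> mw Lw; apply: tree_cycle_free; exact: dendric.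
have no4 : ext1_cycle4_free (inL X) m.
  by apply: ext1_cycle4_free_of_graphs => // w mw Lw; case: (cycle_free w mw Lw).
have [N mN [jointR jointL]] := joint_extensions k L_fact L_ext no4.
exists N.+1; split=> // w Lw /ltnW Nw.
apply: double_star_simple_tree.
apply: (ext_double_star_all L_fact jointR jointL k_gt0 _ Nw Lw).
move=> w' Nw' Lw'; have [no4' no6'] := cycle_free w' (leq_trans mN Nw') Lw'.
exact: (ext1_double_star L_fact L_ext jointR jointL k_gt0 Nw' Lw' no4' no6').
Qed.
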